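(* Let $\mathcal{D}$ be an $S(2,k,v)$ that has a near parallel class. Then $G_1=1$-$\mathrm{BIG}(\mathcal{D})$ is not silver.
   Context: A Steiner $2$-design $S(2,k,v)$ ($2<k<v$) is a pair $(V,\mathcal{B})$ with $|V|=v$ and $\mathcal{B}$ a collection of $k$-subsets of $V$ (blocks) such that every $2$-subset of $V$ lies in exactly one block. A partial parallel class is a set of pairwise disjoint blocks; a near parallel class is a partial parallel class whose union is $V$ minus a single element. The $1$-block intersection graph $1$-$\mathrm{BIG}(\mathcal{D})$ has the blocks as vertices, two blocks adjacent iff they intersect in exactly one element (it is $k(v-k)/(k-1)$-regular). An $\alpha$-set of a graph is a maximum independent set. Let $G$ be an $r$-regular graph and $c$ a proper $(r+1)$-coloring of $G$. A vertex $x$ is rainbow with respect to $c$ if every one of the $r+1$ colors appears on $N[x]=N(x)\cup\{x\}$. Given an $\alpha$-set $I$, $c$ is silver with respect to $I$ if every $x\in I$ is rainbow; $G$ is silver if it admits a silver coloring with respect to some $\alpha$-set. *)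

From mathcomp Require Import all_boot.
Set Implicit Arguments. Unset Strict Implicit. Unset Printing Implicit Defensive.

Definition steiner_2design (T : finType) (B : {set {set T}}) (k : nat) : Prop :=
  [/\ 2 < k, k < #|T|,
      (forall b, b \in B -> #|b| = k) &
      (forall x y : T, x != y ->
         #|[set b in B | (x \in b) && (y \in b)]| = 1)].

Definition partial_parallel_class (T : finType) (B P : {set {set T}}) : Prop :=
  P \subset B /\
  (forall b1 b2, b1 \in P -> b2 \in P -> b1 != b2 -> [disjoint b1 & b2]).

Definition near_parallel_class (T : finType) (B P : {set {set T}}) : Prop :=
  partial_parallel_class B P /\ exists z : T, cover P = [set~ z].

Definition block (T : finType) (B : {set {set T}}) := {b : {set T} | b \in B}.

Definition BIG1 (T : finType) (B : {set {set T}}) : rel (block B) :=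
  fun b1 b2 => #|val b1 :&: val b2| == 1.

Arguments BIG1 {T} B.

Definition regular_graph (V : finType) (e : rel V) (r : nat) : Prop :=
  forall x : V, #|[set y | e x y]| = r.

Definition independent (V : finType) (e : rel V) (I : {set V}) : Prop :=
  forall x y, x \in I -> y \in I -> ~~ e x y.

Definition alpha_set (V : finType) (e : rel V) (I : {set V}) : Prop :=
  independent e I /\ (forall J : {set V}, independent e J -> #|J| <= #|I|).

Definition proper_coloring (V : finType) (e : rel V) (n : nat) (c : V -> 'I_n) : Prop :=
  forall x y, e x y -> c x != c y.

Definition rainbow (V : finType) (e : rel V) (n : nat) (c : V -> 'I_n) (x : V) : Prop :=
  forall i : 'I_n, exists y : V, ((y == x) || e x y) && (c y == i).

Definition silver_wrt (V : finType) (e : rel V) (r : nat) (I : {set V})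
  (c : V -> 'I_r.+1) : Prop :=
  proper_coloring e c /\ (forall x, x \in I -> rainbow e c x).

Definition silver (V : finType) (e : rel V) : Prop :=
  exists r : nat, regular_graph e r /\
    exists I : {set V}, alpha_set e I /\
      exists c : V -> 'I_r.+1, silver_wrt e I c.

From mathcomp Require Import all_boot zify.
Set Implicit Arguments. Unset Strict Implicit. Unset Printing Implicit Defensive.

(* An alpha-set of the 1-block intersection graph is a set of pairwise disjoint
   blocks, so the near parallel class forces every alpha-set I to be a near
   parallel class itself, missing some point z.  In a silver colouring each
   colour occurs exactly once on N[x] for x in I, as |N[x]| = r + 1.  A block of
   I lies in one such neighbourhood and any other block y in k - [z in y] of
   them, so counting the blocks of colour i over the neighbourhoods of I gives
   |I| + [i colours a block through z] = a_i (mod k), where a_i is the number of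
   blocks of I coloured i.  The s = (v-1)/(k-1) > |I| blocks through z form a
   clique.  If k does not divide |I|+1, every colour on that clique also
   occurs on I, whence s <= |I|.  Otherwise each of the r+1-s >= s-1 remaining
   colours occurs at least twice on I, whence 2(s-1) <= |I| < s, i.e. s <= 1. *)

Lemma card_bigcup_disjoint (I T : finType) (J : {set I}) (F : I -> {set T}) :
  {in J &, forall i j, i != j -> [disjoint F i & F j]} ->
  #|\bigcup_(i in J) F i| = \sum_(i in J) #|F i|.
Proof.
move=> disjF; rewrite -sum1_card.
under [RHS]eq_bigr => i _ do rewrite -sum1_card.
rewrite (exchange_big_dep (mem (\bigcup_(i in J) F i))) /=; last first.
  by move=> i x iJ xFi; apply/bigcupP; exists i.
apply: eq_bigr => x /bigcupP [i iJ xFi].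
rewrite (big_pred1 i) // => j; apply/andP/eqP => [[jJ xFj] | ->]; last by [].
by apply/eqP; apply: contraTT xFi => /(disjF _ _ jJ iJ)/disjointFr/(_ xFj) ->.
Qed.

Lemma card_setI_bigcup_disjoint (I T : finType) (J : {set I}) (F : I -> {set T})
    (Y : {set T}) :
  {in J &, forall i j, i != j -> [disjoint F i & F j]} ->
  #|Y :&: \bigcup_(i in J) F i| = \sum_(i in J) #|Y :&: F i|.
Proof.
move=> disjF; rewrite -card_bigcup_disjoint => [|i j iJ jJ ij].
  apply: eq_card => x; rewrite inE; apply/andP/bigcupP.
    by case=> xY /bigcupP [i iJ xFi]; exists i; rewrite // inE xY.
  by case=> i iJ /setIP [xY xFi]; split; last by apply/bigcupP; exists i.
exact: disjointW (subsetIr _ _) (subsetIr _ _) (disjF i j iJ jJ ij).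
Qed.

Lemma card_set_sum (V : finType) (P Q : pred V) :
  #|[set x | P x & Q x]| = \sum_(x | P x) (Q x : nat).
Proof.
rewrite -sum1_card [LHS]big_mkcond [RHS]big_mkcond; apply: eq_bigr => x _.
by rewrite inE; case: (P x); case: (Q x).
Qed.

Lemma leq_of_mul_leq_succ a m k n : a * k = n -> m * k <= n.+1 -> 1 < k -> m <= a.
Proof. nia. Qed.

Lemma ltn_of_mul_pred m s k : 0 < m -> 0 < k -> s * k.-1 = m * k -> m < s.
Proof. nia. Qed.

Definition closed_nbhd (V : finType) (e : rel V) (x : V) : {set V} :=
  [set y | (y == x) || e x y].

Section Colourings.
Variables (V : finType) (e : rel V).

Lemma card_closed_nbhd r x :
  regular_graph e r -> ~~ e x x -> #|closed_nbhd e x| = r.+1.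
Proof.
move=> reg exx; have -> : closed_nbhd e x = x |: [set y | e x y].
  by apply/setP => y; rewrite !inE.
by rewrite cardsU1 inE (negbTE exx) reg.
Qed.

Lemma rainbow_colour_unique r (c : V -> 'I_r.+1) x i :
  regular_graph e r -> ~~ e x x -> rainbow e c x ->
  #|[set y in closed_nbhd e x | c y == i]| = 1.
Proof.
move=> reg exx rain.
have onto : c @: closed_nbhd e x = setT.
  apply/setP => j; rewrite inE; have [y /andP [yN /eqP <-]] := rain j.
  by apply: imset_f; rewrite inE.
have /imset_injP inj_c : #|c @: closed_nbhd e x| == #|closed_nbhd e x|.
  by rewrite onto cardsT card_ord (card_closed_nbhd reg exx).
have [y0 /andP [y0N /eqP cy0]] := rain i.
apply/eqP/cards1P; exists y0; apply/setP => y; rewrite !inE.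
apply/andP/eqP => [[yN /eqP cy] | ->]; last by rewrite y0N cy0.
by apply: inj_c; rewrite ?inE // cy cy0.
Qed.

Lemma proper_coloring_inj_clique n (c : V -> 'I_n) (Z : {set V}) :
  proper_coloring e c -> {in Z &, forall y y', y != y' -> e y y'} ->
  {in Z &, injective c}.
Proof.
move=> proper clique y y' yZ y'Z cyy'; apply/eqP/negPn/negP.
by move=> /(clique y y' yZ y'Z)/proper; rewrite cyy' eqxx.
Qed.

End Colourings.

Section SteinerDesign.
Variables (T : finType) (B : {set {set T}}) (k : nat).
Hypothesis design : steiner_2design B k.

Lemma block_card (x : block B) : #|val x| = k.
Proof. by case: design => _ _ cardB _; exact: cardB (valP x). Qed.

Lemma block_eq (x y : block B) p q : p != q ->
  p \in val x -> q \in val x -> p \in val y -> q \in val y -> x = y.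
Proof.
case: design => _ _ _ pairB pq px qx py qy; apply: val_inj.
have /eqP := pairB p q pq; rewrite eqn_leq => /andP [/card_le1_eqP le1 _].
by apply: le1; rewrite inE ?(valP x) ?(valP y) ?px ?qx ?py ?qy.
Qed.

Lemma card_blockI_le1 (x y : block B) : x != y -> #|val x :&: val y| <= 1.
Proof.
move=> xy; rewrite leqNgt; apply/negP => /card_gt1P [p [q [+ + pq]]].
rewrite !inE => /andP [px py] /andP [qx qy].
by move/eqP: xy; apply; exact: (block_eq pq).
Qed.

Lemma BIG1_irrefl (x : block B) : ~~ BIG1 B x x.
Proof.
by rewrite /BIG1 setIid block_card; case: design => k2 _ _ _; case: k k2 => [|[]].
Qed.

Lemma BIG1_meet (x y : block B) :
  x != y -> BIG1 B x y = ~~ [disjoint val x & val y].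
Proof.
move=> /card_blockI_le1; rewrite /BIG1 -setI_eq0 -cards_eq0.
by case: #|_| => [|[]].
Qed.

Lemma independent_BIG1P (J : {set block B}) :
  independent (BIG1 B) J <->
  {in J &, forall x y : block B, x != y -> [disjoint val x & val y]}.
Proof.
split=> [indJ x y xJ yJ xy | disjJ x y xJ yJ].
  by move: (indJ x y xJ yJ); rewrite BIG1_meet // negbK.
have [<-|xy] := eqVneq x y; first exact: BIG1_irrefl.
by rewrite BIG1_meet // disjJ.
Qed.

Lemma card_bigcup_disjoint_blocks (J : {set block B}) :
  {in J &, forall x y : block B, x != y -> [disjoint val x & val y]} ->
  #|\bigcup_(x in J) val x| = #|J| * k.
Proof.
move/card_bigcup_disjoint => ->; rewrite -sum_nat_const.
by apply: eq_bigr => x _; exact: block_card.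
Qed.

Definition blocks_through (p : T) : {set block B} := [set y : block B | p \in val y].

Lemma card_blocks_through p : #|blocks_through p| * k.-1 = #|T|.-1.
Proof.
have disj : {in blocks_through p &, forall x y : block B, x != y ->
    [disjoint val x :\ p & val y :\ p]}.
  move=> x y; rewrite !inE => px py xy; rewrite -setI_eq0; apply/eqP/setP => q.
  rewrite !inE; apply/negP => /andP [/andP [qp qx] /andP [_ qy]].
  by move/eqP: xy; apply; exact: (block_eq qp).
have cover_p : \bigcup_(y in blocks_through p) (val y :\ p) = [set~ p].
  apply/setP => q; rewrite !inE; apply/bigcupP/idP => [[y _] | qp].
    by case/setD1P.
  case: design => _ _ _ /(_ q p qp) /eqP /cards1P [b bqp].
  have : b \in [set b in B | (q \in b) && (p \in b)] by rewrite bqp inE.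
  rewrite inE => /andP [bB /andP [qb pb]].
  by exists (exist _ b bB); rewrite !inE /= ?qb ?pb ?qp.
rewrite -(cardsC1 p) -cover_p card_bigcup_disjoint // -sum_nat_const.
apply: eq_bigr => y; rewrite inE => py.
by rewrite -(block_card y) (cardsD1 p (val y)) py.
Qed.

Lemma card_blocks_through_eq p q : #|blocks_through p| = #|blocks_through q|.
Proof.
have k1 : 0 < k.-1 by case: design; case: k => [|[]].
by apply/eqP; rewrite -(eqn_pmul2r k1) !card_blocks_through.
Qed.

Lemma card_blocks_through_le_nbhd (x : block B) p q : p != q ->
  p \in val x -> q \in val x ->
  #|blocks_through p| + #|blocks_through q| <= #|closed_nbhd (BIG1 B) x| + 1.
Proof.
move=> pq px qx; rewrite -cardsUI leq_add //.
  apply/subset_leq_card/subsetP => y; rewrite !inE.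
  have [//|yx] := eqVneq y x; rewrite BIG1_meet 1?eq_sym // => /orP [py | qy].
    by apply/pred0Pn; exists p; rewrite /= px.
  by apply/pred0Pn; exists q; rewrite /= qx.
rewrite -(cards1 x); apply/subset_leq_card/subsetP => y; rewrite !inE.
by move=> /andP [py qy]; apply/eqP; exact: (block_eq pq).
Qed.

Lemma blocks_through_clique p :
  {in blocks_through p &, forall y y' : block B, y != y' -> BIG1 B y y'}.
Proof.
move=> y y'; rewrite !inE => py py' yy'; rewrite BIG1_meet //.
by apply/pred0Pn; exists p; rewrite /= py.
Qed.

Lemma alpha_set_near_parallel (I : {set block B}) :
  alpha_set (BIG1 B) I -> (exists P, near_parallel_class B P) ->
  exists z, \bigcup_(x in I) val x = [set~ z].
Proof.
move=> [/independent_BIG1P disjI maxI] [P [[PB disjP] [z0 coverP]]].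
have [k2 kT _ _] := design.
set IP := [set x : block B | val x \in P].
have disjIP : {in IP &, forall x y : block B, x != y -> [disjoint val x & val y]}.
  by move=> x y; rewrite !inE => xP yP xy; exact: disjP.
have coverIP : \bigcup_(x in IP) val x = [set~ z0].
  rewrite -coverP; apply/setP => p; apply/bigcupP/bigcupP => [[x] | [b bP pb]].
    by rewrite inE => xP px; exists (val x).
  by exists (exist _ b (subsetP PB b bP)); rewrite ?inE.
have cardIP : #|IP| * k = #|T|.-1.
  by rewrite -card_bigcup_disjoint_blocks // coverIP cardsC1.
have cardI : #|I| * k = #|T|.-1.
  have IP_le : #|IP| <= #|I| by apply: maxI; exact/independent_BIG1P.
  suff /anti_leq -> : (#|I| <= #|IP|) && (#|IP| <= #|I|) by [].
  rewrite IP_le andbT; apply: (leq_of_mul_leq_succ cardIP); last exact: ltnW.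
  by rewrite prednK ?(leq_ltn_trans _ kT) // -card_bigcup_disjoint_blocks ?max_card.
have /cards1P [z zU] : #|~: \bigcup_(x in I) val x| == 1.
  have := cardsC (\bigcup_(x in I) val x).
  rewrite card_bigcup_disjoint_blocks // cardI; lia.
by exists z; rewrite -zU setCK.
Qed.

Section SilverColouring.
Variables (r : nat) (I : {set block B}) (c : block B -> 'I_r.+1) (z : T).
Hypotheses (regB : regular_graph (BIG1 B) r)
  (disjI : {in I &, forall x y : block B, x != y -> [disjoint val x & val y]})
  (coverI : \bigcup_(x in I) val x = [set~ z])
  (proper_c : proper_coloring (BIG1 B) c)
  (rainbowI : forall x, x \in I -> rainbow (BIG1 B) c x).

Lemma alpha_not_through_z y : y \in I -> z \notin val y.
Proof.
move=> yI; apply/negP => zy.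
have : z \in \bigcup_(x in I) val x by apply/bigcupP; exists y.
by rewrite coverI !inE eqxx.
Qed.

Lemma card_alpha_nbhd_in y :
  y \in I -> #|[set x in I | y \in closed_nbhd (BIG1 B) x]| = 1.
Proof.
move=> yI; apply/eqP/cards1P; exists y; apply/setP => x; rewrite !inE.
apply/andP/eqP => [[xI /orP [/eqP //| adj]] | ->]; last by rewrite yI eqxx.
apply/eqP; apply: contraTT adj => xy.
by rewrite BIG1_meet // negbK disjI.
Qed.

Lemma card_alpha_nbhd_notin y : y \notin I ->
  #|[set x in I | y \in closed_nbhd (BIG1 B) x]| + (z \in val y) = k.
Proof.
move=> yI; rewrite card_set_sum.
have -> : \sum_(x in I) (y \in closed_nbhd (BIG1 B) x : nat)
    = \sum_(x in I) #|val y :&: val x|.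
  apply: eq_bigr => x xI; have xy : x != y by apply: contraNneq yI => <-.
  rewrite inE eq_sym (negbTE xy) /= BIG1_meet // -setI_eq0 -cards_eq0 setIC.
  by move: (card_blockI_le1 xy); rewrite setIC; case: #|_| => [|[]].
rewrite -card_setI_bigcup_disjoint // coverI -setDE -(block_card y).
by rewrite (cardsD1 z (val y)) addnC.
Qed.

Lemma card_colour_through_z i :
  #|[set y | c y == i & z \in val y]| = (i \in c @: blocks_through z).
Proof.
have inj_c := proper_coloring_inj_clique proper_c (@blocks_through_clique z).
case: imsetP => [[y0 y0Z ->] | noZ].
  apply/eqP/cards1P; exists y0; apply/setP => y; rewrite !inE.
  apply/andP/eqP => [[/eqP cy zy] | ->]; last by move: y0Z; rewrite inE => ->.
  have yZ : y \in blocks_through z by rewrite inE.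
  exact: inj_c yZ y0Z cy.
apply/eqP; rewrite cards_eq0; apply/eqP/setP => y; rewrite !inE.
apply/negP => /andP [/eqP cy zy]; apply: noZ; exists y; by rewrite ?inE.
Qed.

Lemma colour_class_mod i :
  #|I| + (i \in c @: blocks_through z) = #|[set x in I | c x == i]| %[mod k].
Proof.
pose N x := closed_nbhd (BIG1 B) x.
have rainbow_count : \sum_(y | c y == i) #|[set x in I | y \in N x]| = #|I|.
  under eq_bigr => y _ do rewrite card_set_sum.
  rewrite exchange_big /= -sum1_card; apply: eq_bigr => x xI.
  rewrite -card_set_sum -(rainbow_colour_unique i regB (BIG1_irrefl x) (rainbowI xI)).
  by apply: eq_card => y; rewrite !inE andbC.
have weight y :
    #|[set x in I | y \in N x]| + (z \in val y) + k * (y \in I) = (y \in I) + k.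
  case: (boolP (y \in I)) => yI; last by rewrite muln0 addn0 card_alpha_nbhd_notin.
  by rewrite card_alpha_nbhd_in // (negbTE (alpha_not_through_z yI)) muln1 addn0.
have : \sum_(y | c y == i)
           (#|[set x in I | y \in N x]| + (z \in val y) + k * (y \in I))
       = \sum_(y | c y == i) ((y \in I) + k).
  by apply: eq_bigr => y _; exact: weight.
rewrite !big_split /= -big_distrr /= rainbow_count -!card_set_sum.
rewrite card_colour_through_z.
have -> : [set y | c y == i & y \in I] = [set x in I | c x == i].
  by apply/setP => y; rewrite !inE andbC.
move=> count; rewrite -(modnMDl #|[set x in I | c x == i]|) addnC mulnC count.
by rewrite sum_nat_const addnC modnMDl.
Qed.

Lemma card_blocks_through_le_alpha :
  ~~ (k %| #|I|.+1) -> #|blocks_through z| <= #|I|.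
Proof.
move=> ndvd.
have inj_c := proper_coloring_inj_clique proper_c (@blocks_through_clique z).
rewrite -(card_in_imset inj_c); apply: leq_trans (leq_imset_card c I).
apply/subset_leq_card/subsetP => _ /imsetP [y yZ ->].
have := colour_class_mod (c y); rewrite (imset_f c yZ).
case: (set_0Vmem [set x in I | c x == c y]) => [-> | [x]].
  by rewrite cards0 mod0n addn1 => mk; rewrite /dvdn mk in ndvd.
by rewrite inE => /andP [xI /eqP <-] _; apply: imset_f.
Qed.

Lemma twice_missing_colours_le_alpha :
  k %| #|I|.+1 -> 2 * (r.+1 - #|blocks_through z|) <= #|I|.
Proof.
move=> dvd; have [k2 _ _ _] := design.
have inj_c := proper_coloring_inj_clique proper_c (@blocks_through_clique z).
have two_le i : i \notin c @: blocks_through z -> 2 <= #|[set x in I | c x == i]|.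
  move=> iZ; have := colour_class_mod i; rewrite (negbTE iZ) addn0 => ma.
  have : k %| #|[set x in I | c x == i]|.+1.
    by rewrite /dvdn -addn1 -modnDml -ma modnDml addn1.
  by move=> /(dvdn_leq (ltn0Sn _)); apply: leq_trans k2.
have sum_colours : \sum_(i : 'I_r.+1) #|[set x in I | c x == i]| = #|I|.
  rewrite -sum1_card (partition_big c predT) //=.
  by apply: eq_bigr => i _; rewrite sum1dep_card.
have card_missing : #|~: (c @: blocks_through z)| = r.+1 - #|blocks_through z|.
  have := cardsC (c @: blocks_through z).
  by rewrite card_ord (card_in_imset inj_c) => count; rewrite -[in RHS]count addKn.
rewrite -card_missing -sum_colours (bigID [in c @: blocks_through z]) /=.
rewrite mulnC -sum_nat_const; apply: leq_trans (leq_addl _ _).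
by under eq_bigl => i do rewrite in_setC; exact: leq_sum.
Qed.

Lemma silver_near_parallel_contra : False.
Proof.
have [k2 kT _ _] := design.
have cardI : #|I| * k = #|T|.-1.
  by rewrite -card_bigcup_disjoint_blocks // coverI cardsC1.
have I_gt0 : 0 < #|I| by nia.
have I_lt_s : #|I| < #|blocks_through z|.
  apply: ltn_of_mul_pred I_gt0 (ltnW (ltnW k2)) _.
  by rewrite card_blocks_through cardI.
have two_s : #|blocks_through z| + #|blocks_through z| <= r.+2.
  have [x0 x0I] := card_gt0P I_gt0.
  have /card_gt1P [p [q [px qx pq]]] : 1 < #|val x0| by rewrite block_card ltnW.
  have := card_blocks_through_le_nbhd pq px qx.
  rewrite !(card_blocks_through_eq _ z).
  by rewrite (card_closed_nbhd regB (BIG1_irrefl x0)) addn1.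
have [dvd | ndvd] := boolP (k %| #|I|.+1).
  by have := twice_missing_colours_le_alpha dvd; lia.
by have := card_blocks_through_le_alpha ndvd; lia.
Qed.

End SilverColouring.

End SteinerDesign.

Theorem theorem5 (T : finType) (B : {set {set T}}) (k : nat) :
  steiner_2design B k ->
  (exists P : {set {set T}}, near_parallel_class B P) ->
  ~ silver (BIG1 B).
Proof.
move=> design npc [r [regB [I [alphaI [c [proper_c rainbowI]]]]]].
have [z coverI] := alpha_set_near_parallel design alphaI npc.
have disjI := iffLR (independent_BIG1P design I) (proj1 alphaI).
exact (silver_near_parallel_contra design regB disjI coverI proper_c rainbowI).
Qed.
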